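(* Consider a connected regular graph with a proper two-coloring having $N_{\mathrm{G}}=N_{\mathrm{R}}=N/2$ green and red vertices, under the colored Moran process with fitness values $a_{\mathrm{G}}=r+\sigma$, $a_{\mathrm{R}}=r-\sigma$, $b_{\mathrm{G}}=1+\sigma$, $b_{\mathrm{R}}=1-\sigma$, where $r>0$, $r\neq1$, and $0\le\sigma<\min(1,r)$. Then the mean fixation probability of a single randomly placed $A$ is $$\rho_A=\frac{r(r-1)}{(r^2-\sigma^2)\left(1-\left(\frac{1-\sigma^2}{r^2-\sigma^2}\right)^{N/2}\right)}.$$ Consequently, on $0\le\sigma<\min(1,r)$, $\rho_A$ is an increasing function of $\sigma$ when $r>1$ and a decreasing function of $\sigma$ when $r<1$; and when $r=1$, $\rho_A=1/N$ for all $\sigma\in[0,1)$.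
   Context: A proper two-coloring assigns each vertex green or red so that adjacent vertices have different colors. Each vertex holds a type $A$ or type $B$ individual; $A$ has fitness $a_{\mathrm{G}}$ on green and $a_{\mathrm{R}}$ on red vertices, $B$ has $b_{\mathrm{G}}$ on green and $b_{\mathrm{R}}$ on red. Colored Moran process: each step an individual is chosen to reproduce with probability proportional to fitness and its offspring replaces a uniformly random neighbor. The mean fixation probability of $A$ is the probability that a single $A$, placed at a uniformly random vertex in an all-$B$ population, eventually takes over. *)

From HB Require Import structures.
From mathcomp Require Import all_boot all_order all_algebra.
From mathcomp Require Import all_classical all_reals all_analysis.
Set Implicit Arguments. Unset Strict Implicit. Unset Printing Implicit Defensive.
Import Order.TTheory GRing.Theory Num.Theory numFieldNormedType.Exports.
Local Open Scope ring_scope.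

Section ColoredMoran.
Variables (R : realType) (V : finType) (e : rel V) (green : pred V).
Variables (aG aR bG bR : R).

Definition deg (x : V) : nat := #|[set y | e x y]|.

(* state = set S of vertices occupied by type A; fitness of the individual at x *)
Definition fit (S : {set V}) (x : V) : R :=
  if x \in S then (if green x then aG else aR) else (if green x then bG else bR).

Definition total_fit (S : {set V}) : R := \sum_(z : V) fit S z.

(* x reproduces, its offspring replaces neighbour y *)
Definition moran_step (S : {set V}) (x y : V) : {set V} :=
  if x \in S then y |: S else S :\ y.

(* probability, starting from state S, that the process is in the all-A
   state setT after n steps (setT is absorbing, so this is the probability
   of A-fixation by time n) *)
Fixpoint absorb_prob (n : nat) : {set V} -> R :=
  match n with
  | 0 => fun S => (S == [set: V])%:R
  | n'.+1 => fun S =>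
      \sum_(x : V) \sum_(y | e x y)
        (fit S x / total_fit S) / (deg x)%:R * absorb_prob n' (moran_step S x y)
  end.

Definition mean_fix_seq (n : nat) : R :=
  (#|V|%:R)^-1 * \sum_(x : V) absorb_prob n [set x].

Definition mean_fixation : R := limn mean_fix_seq.

End ColoredMoran.

Definition rho_seq (R : realType) (V : finType) (e : rel V) (green : pred V)
  (r s : R) : nat -> R :=
  mean_fix_seq e green (r + s) (r - s) (1 + s) (1 - s).

Definition rho_A (R : realType) (V : finType) (e : rel V) (green : pred V)
  (r s : R) : R :=
  mean_fixation e green (r + s) (r - s) (1 + s) (1 - s).

(* The fixation probability by time n, [absorb_prob n], is the n-th iterate of
   the one-step expectation operator [step_op] of the Moran chain applied to
   the indicator of the all-A state.  These iterates increase and are bounded,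
   so they converge to a function that is harmonic ([step_op f = f]) with
   boundary values 0 on the empty state and 1 on the full state.  On a
   connected graph a maximum principle shows that such a harmonic function is
   unique, so it suffices to exhibit one in closed form.  On a regular graph
   harmonicity reduces to a local identity along every edge (lemma
   [step_op_harmonic]); two families satisfy it: normalized products
   [(1 - prod_{z in S} c z) / (1 - prod_z c z)], which give the closed form for
   r <> 1, and normalized sums [sum_{z in S} c z / sum_z c z], which give 1/N
   for r = 1.  Rewriting the closed form as r / ((r + 1) sum_{i<N/2} q^i) with
   q = (1 - s^2)/(r^2 - s^2) yields the monotonicity in s. *)
From HB Require Import structures.
From mathcomp Require Import all_boot all_order all_algebra.
From mathcomp Require Import all_classical all_reals all_analysis.
From mathcomp Require Import lra ring zify.
Set Implicit Arguments. Unset Strict Implicit. Unset Printing Implicit Defensive.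
Import Order.TTheory GRing.Theory Num.Theory numFieldNormedType.Exports.
Local Open Scope ring_scope.

(* The finite-set empty and full states (the bare names are shadowed by
   the classical sets of MathComp-Analysis). *)
Local Notation fset0 := (@finset.set0 _).
Local Notation fsetT := (finset.setTfor _).

Lemma boundary_edge (V : finType) (e : rel V) :
  symmetric e -> (forall x y, connect e x y) ->
  forall S : {set V}, S != fset0 -> S != fsetT ->
  exists x y, [/\ x \in S, y \notin S & e x y].
Proof.
move=> esymm econn S /set0Pn [x0 Sx0] /eqP SnT.
have /subsetPn [y0 _ Sy0] : ~~ (fsetT \subset S) by rewrite finset.subTset; apply/eqP.
case: (boolP [exists x, [exists y, [&& x \in S, y \notin S & e x y]]]).
  by move=> /existsP[x /existsP[y /and3P[xS yS exy]]]; exists x, y.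
move=> /existsPn noedge; exfalso.
have closedS : fingraph.closed e [pred x | x \in S].
  move=> u v euv; rewrite !inE; apply/idP/idP => [Su|Sv].
    by apply: contraNT (noedge u) => Sv; apply/existsP; exists v; rewrite Su Sv.
  apply: contraNT (noedge v) => Su; apply/existsP; exists u.
  by rewrite Su Sv esymm.
have := closed_connect closedS (econn x0 y0).
by rewrite !inE Sx0 (negbTE Sy0).
Qed.

Lemma setU1_id (T : finType) (a : T) (A : {set T}) : a \in A -> a |: A = A.
Proof. by move=> aA; apply/finset.setUidPr; rewrite finset.sub1set. Qed.

Lemma setD1_id (T : finType) (a : T) (A : {set T}) : a \notin A -> A :\ a = A.
Proof. by move=> aA; apply/setP => z; rewrite !inE; case: eqP => // ->; rewrite (negbTE aA). Qed.

Section MoranChain.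
Variables (R : realType) (V : finType) (e : rel V) (green : pred V).
Variables (aG aR bG bR : R).
Hypothesis esymm : symmetric e.
Hypothesis econn : forall x y, connect e x y.
Hypothesis V_gt0 : (0 < #|V|)%N.
Variable k : nat.
Hypothesis k_gt0 : (0 < k)%N.
Hypothesis regular : forall x, deg e x = k.
Hypotheses (aG_gt0 : 0 < aG) (aR_gt0 : 0 < aR) (bG_gt0 : 0 < bG) (bR_gt0 : 0 < bR).

Local Notation fitS := (fit green aG aR bG bR).
Local Notation W := (total_fit green aG aR bG bR).
Local Notation ap := (absorb_prob e green aG aR bG bR).

Definition step_weight (S : {set V}) (x : V) : R := (fitS S x / W S) / (deg e x)%:R.

Definition step_op (f : {set V} -> R) (S : {set V}) : R :=
  \sum_(x : V) \sum_(y | e x y) step_weight S x * f (moran_step S x y).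

Lemma absorb_probS n S : ap n.+1 S = step_op (ap n) S. Proof. by []. Qed.

Lemma fit_gt0 S x : 0 < fitS S x.
Proof. by rewrite /fit; case: (x \in S); case: (green x). Qed.

Lemma total_fit_gt0 S : 0 < W S.
Proof.
have /card_gt0P [x0 _] := V_gt0.
rewrite /total_fit (bigD1 x0) //= ltr_pwDl ?fit_gt0 //.
by apply: sumr_ge0 => i _; exact: ltW (fit_gt0 _ _).
Qed.

Lemma step_weight_gt0 S x : 0 < step_weight S x.
Proof. by rewrite /step_weight regular !divr_gt0 ?fit_gt0 ?total_fit_gt0 ?ltr0n. Qed.

Lemma sum_neighbours x (c : R) : \sum_(y | e x y) c = c * (deg e x)%:R.
Proof.
by rewrite sumr_const /deg cardsE mulr_natr; congr (_ *+ _); apply: eq_card.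
Qed.

Lemma step_weight_sum S : \sum_x \sum_(y | e x y) step_weight S x = 1.
Proof.
under eq_bigr => x _ do rewrite sum_neighbours /step_weight regular divfK ?pnatr_eq0 -?lt0n //.
by rewrite -mulr_suml divff // gt_eqF // total_fit_gt0.
Qed.

Lemma step_op_const (c : R) S : step_op (fun=> c) S = c.
Proof.
rewrite /step_op; under eq_bigr => x _ do rewrite -mulr_suml.
by rewrite -mulr_suml step_weight_sum mul1r.
Qed.

Lemma step_opB f g S : step_op (fun T => f T - g T) S = step_op f S - step_op g S.
Proof.
rewrite /step_op -sumrB; apply: eq_bigr => x _; rewrite -sumrB.
by apply: eq_bigr => y _; rewrite mulrBr.
Qed.

Lemma step_op_le f g S : (forall T, f T <= g T) -> step_op f S <= step_op g S.
Proof.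
move=> fg; apply: ler_sum => x _; apply: ler_sum => y _.
by apply: ler_wpM2l; [exact: ltW (step_weight_gt0 _ _)|exact: fg].
Qed.

Lemma step_op_gt0 f S x y : (forall T, 0 <= f T) -> e x y ->
  0 < f (moran_step S x y) -> 0 < step_op f S.
Proof.
move=> f_ge0 exy fxy.
have term_ge0 x' y' : 0 <= step_weight S x' * f (moran_step S x' y').
  by rewrite mulr_ge0 ?f_ge0 // ltW // step_weight_gt0.
rewrite /step_op (bigD1 x) //= (bigD1 y) //= -addrA ltr_pwDl //.
  by rewrite mulr_gt0 ?step_weight_gt0.
by rewrite addr_ge0 ?sumr_ge0 // => x' _; rewrite sumr_ge0.
Qed.

Lemma step_op_absorbing f S : (forall x y, moran_step S x y = S) -> step_op f S = f S.
Proof.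
move=> stuck; rewrite -[RHS](step_op_const (f S) S).
by apply: eq_bigr => x _; apply: eq_bigr => y _; rewrite stuck.
Qed.

Lemma moran_step_full (x y : V) : moran_step fsetT x y = fsetT.
Proof. by rewrite /moran_step finset.in_setT setU1_id ?inE. Qed.

Lemma moran_step_empty (x y : V) : moran_step fset0 x y = fset0.
Proof. by rewrite /moran_step finset.in_set0; apply/setP => z; rewrite !inE andbF. Qed.

Lemma absorb_prob_full n : ap n fsetT = 1.
Proof.
elim: n => [|n IH] /=; first by rewrite eqxx.
by rewrite -/(step_op _ _) step_op_absorbing // => x y; exact: moran_step_full.
Qed.

Lemma absorb_prob_empty n : ap n fset0 = 0.
Proof.
elim: n => [|n IH] /=; last first.
  by rewrite -/(step_op _ _) step_op_absorbing // => x y; exact: moran_step_empty.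
have /card_gt0P [x0 _] := V_gt0.
by case: eqP => // /setP /(_ x0); rewrite !inE.
Qed.

Lemma absorb_prob_ge0 n S : 0 <= ap n S.
Proof.
elim: n S => [|n IH] S /=; first by case: (_ == _).
by rewrite -/(step_op _ _) -(step_op_const 0 S); apply: step_op_le.
Qed.

Lemma absorb_prob_le1 n S : ap n S <= 1.
Proof.
elim: n S => [|n IH] S /=; first by case: (_ == _).
by rewrite -/(step_op _ _) -(step_op_const 1 S); apply: step_op_le.
Qed.

(* Fixation by time n implies fixation by time n + 1 (the full state is
   absorbing). *)
Lemma absorb_prob_nondecr n S : ap n S <= ap n.+1 S.
Proof.
elim: n S => [|n IH] S; last by rewrite absorb_probS [ap n.+2 S]absorb_probS; apply: step_op_le.
rewrite [ap 0 S]/=; case: eqP => [->|_]; first by rewrite absorb_prob_full.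
exact: absorb_prob_ge0.
Qed.

(* A harmonic function vanishing on both absorbing states is nonpositive:
   at a maximizer of largest cardinality that is neither empty nor full, a
   step across a boundary edge would strictly decrease the value. *)
Lemma harmonic_max_principle (f : {set V} -> R) :
  (forall S, step_op f S = f S) -> f fset0 = 0 -> f fsetT = 0 ->
  forall S, f S <= 0.
Proof.
move=> harm f0 fT S.
have [S0 S0max] : exists S0, forall S, f S <= f S0.
  by have [S0 _ S0max] := @arg_maxP _ _ _ fset0 predT f isT; exists S0 => T; exact: S0max.
have [S1 /eqP fS1 S1big] := @arg_maxnP _ S0 (fun S => f S == f S0)
  (fun S : {set V} => #|S|) (eqxx _).
apply: le_trans (S0max S) _; rewrite -fS1.
have [->|S1n0] := eqVneq S1 fset0; first by rewrite f0.
have [->|S1nT] := eqVneq S1 fsetT; first by rewrite fT.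
have [x [y [xS1 yS1 exy]]] := boundary_edge esymm econn S1n0 S1nT.
have : 0 < step_op (fun T => f S0 - f T) S1.
  apply: (step_op_gt0 (x := x) (y := y)) => // [T|].
    by rewrite subr_ge0.
  rewrite /moran_step xS1 subr_gt0 lt_neqAle S0max // andbT.
  by apply/negP => /S1big; rewrite cardsU1 yS1 /= add1n ltnn.
by rewrite step_opB step_op_const harm fS1 subrr ltxx.
Qed.

Local Open Scope classical_set_scope.

Lemma absorb_prob_cvg S : (fun n => ap n S) @ \oo --> limn (fun n => ap n S).
Proof.
apply: nondecreasing_is_cvgn; first by apply/nondecreasing_seqP => n; exact: absorb_prob_nondecr.
by exists 1 => _ [n _ <-]; exact: absorb_prob_le1.
Qed.

Definition fix_prob (S : {set V}) : R := limn (fun n => ap n S).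

Lemma fix_prob_harmonic S : step_op fix_prob S = fix_prob S.
Proof.
have to_fix : (fun n => ap n.+1 S) @ \oo --> fix_prob S.
  by have := absorb_prob_cvg (S := S); rewrite -cvg_shiftS.
have to_step : (fun n => ap n.+1 S) @ \oo --> step_op fix_prob S.
  apply: (@cvg_big R V +%R 0 predT add_continuous) => // x _.
  apply: (@cvg_big R V +%R 0 _ add_continuous) => // y _.
  by apply: cvgMl_tmp; exact: absorb_prob_cvg.
exact: (cvg_unique _ to_step to_fix).
Qed.

Lemma fix_prob_empty : fix_prob fset0 = 0.
Proof. by rewrite /fix_prob (funext absorb_prob_empty) lim_cst. Qed.

Lemma fix_prob_full : fix_prob fsetT = 1.
Proof. by rewrite /fix_prob (funext absorb_prob_full) lim_cst. Qed.

Lemma absorb_prob_cvg_harmonic (h : {set V} -> R) :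
  (forall S, step_op h S = h S) -> h fset0 = 0 -> h fsetT = 1 ->
  forall S, (fun n => ap n S) @ \oo --> h S.
Proof.
move=> harm h0 hT S; suff <- : fix_prob S = h S by exact: absorb_prob_cvg.
have diff_le0 (f g : {set V} -> R) :
    (forall S, step_op f S = f S) -> (forall S, step_op g S = g S) ->
    f fset0 = g fset0 -> f fsetT = g fsetT -> f S - g S <= 0.
  move=> fh gh e0 eT; apply: (@harmonic_max_principle (fun T => f T - g T)).
  - by move=> T; rewrite step_opB fh gh.
  - by rewrite e0 subrr.
  - by rewrite eT subrr.
have fix_harm := fix_prob_harmonic.
apply/eqP; rewrite eq_le -subr_le0 -[X in _ && X]subr_le0.
by rewrite !diff_le0 // ?fix_prob_empty ?fix_prob_full ?h0 ?hT.
Qed.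

Lemma mean_fix_cvg_harmonic (h : {set V} -> R) :
  (forall S, step_op h S = h S) -> h fset0 = 0 -> h fsetT = 1 ->
  mean_fix_seq e green aG aR bG bR @ \oo --> (#|V|%:R)^-1 * \sum_x h [set x]%SET.
Proof.
move=> harm h0 hT; apply: cvgMl_tmp.
apply: (@cvg_big R V +%R 0 predT add_continuous) => // x _.
exact: absorb_prob_cvg_harmonic.
Qed.

Local Close Scope classical_set_scope.

Definition fitA (x : V) : R := if green x then aG else aR.
Definition fitB (x : V) : R := if green x then bG else bR.

(* On a regular graph, harmonicity is the vanishing, along every edge x y
   leaving S, of the drift of f due to x invading y plus y invading x:
   steps across an edge from both sides are weighted by a common factor. *)
Lemma step_op_harmonic (f : {set V} -> R) :
  (forall (S : {set V}) x y, x \in S -> y \notin S -> e x y ->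
     fitA x * (f (y |: S) - f S) + fitB y * (f (S :\ x) - f S) = 0) ->
  forall S, step_op f S = f S.
Proof.
move=> edge_balance S.
pose drift x y := if e x y then fitS S x * (f (moran_step S x y) - f S) else 0.
have drift_antisym x y : drift x y + drift y x = 0.
  rewrite /drift (esymm y x); case exy: (e x y); last by rewrite addr0.
  rewrite /moran_step /fit; case xS: (x \in S); case yS: (y \in S).
  - by rewrite !setU1_id // !subrr !mulr0 addr0.
  - by have := edge_balance S x y xS (negbT yS) exy; rewrite /fitA /fitB.
  - by have := edge_balance S y x yS (negbT xS) (ltac:(by rewrite esymm));
      rewrite /fitA /fitB addrC.
  - by rewrite !setD1_id ?xS ?yS // !subrr !mulr0 addr0.
have drift_sum : \sum_x \sum_y drift x y = 0.
  have twice : \sum_x \sum_y drift x y + \sum_x \sum_y drift y x = 0.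
    rewrite -big_split /=; apply: big1 => x _; rewrite -big_split /=.
    by apply: big1 => y _; exact: drift_antisym.
  by move: twice; rewrite [X in _ + X]exchange_big; lra.
apply/eqP; rewrite -subr_eq0 -(step_op_const (f S) S) -step_opB; apply/eqP.
rewrite -[RHS](mulr0 ((W S)^-1 / k%:R)) -drift_sum mulr_sumr.
apply: eq_bigr => x _; rewrite mulr_sumr big_mkcond /=.
by apply: eq_bigr => y _; rewrite /drift; case: ifP => _; rewrite ?mulr0 // /step_weight regular; ring.
Qed.

Section HarmonicFunctions.
Variable c : V -> R.

Definition prod_harm (S : {set V}) : R :=
  (1 - \prod_(z in S) c z) / (1 - \prod_z c z).

Lemma prod_harm_harmonic :
  (forall x y, e x y -> fitA x * c x * (1 - c y) + fitB y * (c x - 1) = 0) ->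
  forall S, step_op prod_harm S = prod_harm S.
Proof.
move=> balance; apply: step_op_harmonic => S x y xS yS exy.
rewrite /prod_harm (big_setU1 _ yS) (big_setD1 _ xS) /=.
set D := 1 - \prod_z c z; set P := \prod_(i in S :\ x) c i.
rewrite -[RHS](mulr0 (P / D)) -(balance x y exy); ring.
Qed.

Lemma prod_harm_empty : prod_harm fset0 = 0.
Proof. by rewrite /prod_harm big_set0 subrr mul0r. Qed.

Lemma prod_harm_full : \prod_z c z != 1 -> prod_harm fsetT = 1.
Proof.
move=> P1; rewrite /prod_harm; under eq_bigl do rewrite finset.in_setT.
by rewrite divff // subr_eq0 eq_sym.
Qed.

Lemma prod_harm_singletons :
  \sum_x prod_harm [set x]%SET = (\sum_x (1 - c x)) / (1 - \prod_z c z).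
Proof. by rewrite mulr_suml; apply: eq_bigr => x _; rewrite /prod_harm big_set1. Qed.

Definition sum_harm (S : {set V}) : R := (\sum_(z in S) c z) / (\sum_z c z).

Lemma sum_harm_harmonic : (forall x y, e x y -> fitA x * c y - fitB y * c x = 0) ->
  forall S, step_op sum_harm S = sum_harm S.
Proof.
move=> balance; apply: step_op_harmonic => S x y xS yS exy.
rewrite /sum_harm (big_setU1 _ yS) (big_setD1 _ xS) /=.
rewrite -[RHS](mulr0 (\sum_z c z)^-1) -(balance x y exy); ring.
Qed.

Lemma sum_harm_empty : sum_harm fset0 = 0.
Proof. by rewrite /sum_harm big_set0 mul0r. Qed.

Lemma sum_harm_full : \sum_z c z != 0 -> sum_harm fsetT = 1.
Proof. by move=> C0; rewrite /sum_harm; under eq_bigl do rewrite finset.in_setT; rewrite divff. Qed.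

Lemma sum_harm_singletons : \sum_z c z != 0 -> \sum_x sum_harm [set x]%SET = 1.
Proof. by move=> C0; under eq_bigr => x _ do rewrite /sum_harm big_set1; rewrite -mulr_suml divff. Qed.

End HarmonicFunctions.
End MoranChain.

(* The ratio q = (1 - s^2)/(r^2 - s^2) whose powers govern the fixation
   probability in the parametrization a = r +- s, b = 1 +- s. *)
Definition fix_ratio (R : realType) (r s : R) : R := (1 - s ^+ 2) / (r ^+ 2 - s ^+ 2).

Section FixRatio.
Variables (R : realType) (r : R).

Lemma fix_ratio_ge0 (s : R) : 0 <= s -> s < Num.min 1 r -> 0 <= fix_ratio r s.
Proof. by move=> s0; rewrite lt_min => /andP[s1 sr]; apply: divr_ge0; nra. Qed.

Lemma fix_ratio_pow_neq1 (s : R) (n : nat) : r != 1 -> 0 <= s -> s < Num.min 1 r ->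
  (0 < n)%N -> fix_ratio r s ^+ n != 1.
Proof.
move=> r1 s0 smin n_gt0; have := smin; rewrite lt_min => /andP[s1 sr].
rewrite pexpr_eq1 -?lt0n ?fix_ratio_ge0 //.
have rs_gt0 : 0 < r ^+ 2 - s ^+ 2 by nra.
apply/negP => /eqP /(congr1 (fun t => t * (r ^+ 2 - s ^+ 2))).
rewrite /fix_ratio mul1r divfK ?lt0r_neq0 // => same.
have /eqP : (r - 1) * (r + 1) = 0 by move: same; nra.
by rewrite mulf_eq0 subr_eq0 (negbTE r1) /= gt_eqF //; lra.
Qed.

(* How q moves with s: its variation has the sign of (r^2 - 1). *)
Lemma fix_ratioB (s1 s2 : R) : 0 <= s1 -> s2 < Num.min 1 r -> s1 <= s2 ->
  fix_ratio r s1 - fix_ratio r s2 =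
    (r ^+ 2 - 1) * (s2 ^+ 2 - s1 ^+ 2) / ((r ^+ 2 - s1 ^+ 2) * (r ^+ 2 - s2 ^+ 2)).
Proof.
move=> s1_ge0; rewrite lt_min => /andP[_ s2r] s12.
have n1 : r ^+ 2 - s1 ^+ 2 != 0 by rewrite lt0r_neq0 //; nra.
have n2 : r ^+ 2 - s2 ^+ 2 != 0 by rewrite lt0r_neq0 //; nra.
by rewrite /fix_ratio; field; rewrite n1 n2.
Qed.

Lemma fix_ratio_antitone (s1 s2 : R) : 1 < r -> 0 <= s1 -> s1 <= s2 ->
  s2 < Num.min 1 r -> fix_ratio r s2 <= fix_ratio r s1.
Proof.
move=> r1 s1_ge0 s12 s2min; rewrite -subr_ge0 fix_ratioB //.
move: s2min; rewrite lt_min => /andP[_ s2r].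
by apply: divr_ge0; apply: mulr_ge0; nra.
Qed.

Lemma fix_ratio_monotone (s1 s2 : R) : r < 1 -> 0 <= s1 -> s1 <= s2 ->
  s2 < Num.min 1 r -> fix_ratio r s1 <= fix_ratio r s2.
Proof.
move=> r1 s1_ge0 s12 s2min; rewrite -subr_ge0 -opprB fix_ratioB // -!mulNr.
move: s2min; rewrite lt_min => /andP[_ s2r].
by apply: divr_ge0; apply: mulr_ge0; nra.
Qed.

(* The closed form r(r-1)/((r^2-s^2)(1-q^n)) written with the geometric sum
   1 + q + ... + q^(n-1), which exhibits its dependence on q. *)
Lemma fix_closed_form_geometric (s : R) (n : nat) :
  r != 1 -> 0 <= s -> s < Num.min 1 r -> (0 < n)%N ->
  r * (r - 1) / ((r ^+ 2 - s ^+ 2) * (1 - fix_ratio r s ^+ n)) =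
    r / ((r + 1) * \sum_(i < n) fix_ratio r s ^+ i).
Proof.
move=> r1 s0 smin n_gt0; have := smin; rewrite lt_min => /andP[s1 sr].
have rs : r ^+ 2 - s ^+ 2 != 0 by rewrite lt0r_neq0 //; nra.
have rm1 : r - 1 != 0 by rewrite subr_eq0.
have rp1 : r + 1 != 0 by rewrite lt0r_neq0 //; lra.
have geom := subrX1 (fix_ratio r s) n.
have qm1 : (r ^+ 2 - s ^+ 2) * (fix_ratio r s - 1) = (1 - r) * (r + 1).
  by rewrite /fix_ratio; field.
have -> : (r ^+ 2 - s ^+ 2) * (1 - fix_ratio r s ^+ n) =
    (r - 1) * (r + 1) * \sum_(i < n) fix_ratio r s ^+ i.
  rewrite -[1 - _ ^+ n]opprB geom mulrN mulrA qm1; ring.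
by field; rewrite rm1 rp1 /= (@lt0r_neq0 _ (\sum_(i < n) _)) // (bigD1 (Ordinal n_gt0)) //=
  expr0 ltr_pwDl // sumr_ge0 // => i _; rewrite exprn_ge0 // fix_ratio_ge0.
Qed.

(* Averaging the one-vertex values (r - 1)/(r - s) and (r - 1)/(r + s) of the
   product harmonic function over G green and G red vertices. *)
Lemma closed_form_average (s G Q : R) : 0 <= s -> s < Num.min 1 r ->
  G != 0 -> Q != 1 ->
  (G + G)^-1 * (G * ((r - 1) / (r - s) + (r - 1) / (r + s)) / (1 - Q)) =
    r * (r - 1) / ((r ^+ 2 - s ^+ 2) * (1 - Q)).
Proof.
move=> s0; rewrite lt_min => /andP[s1 sr] G0 Q1.
have [rs rs' r2s2] : [/\ r - s != 0, r + s != 0 & r ^+ 2 - s ^+ 2 != 0].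
  by split; rewrite lt0r_neq0 //; nra.
have GG : G + G != 0 by rewrite -mulr2n mulrn_eq0 negb_or G0.
by field; rewrite subr_eq0 eq_sym Q1 rs rs' r2s2 GG.
Qed.

End FixRatio.

Lemma geometric_closed_form_antitone (R : realType) (r a b : R) (n : nat) :
  0 < r -> (0 < n)%N -> 0 <= a -> a <= b ->
  r / ((r + 1) * \sum_(i < n) b ^+ i) <= r / ((r + 1) * \sum_(i < n) a ^+ i).
Proof.
move=> r_gt0 n_gt0 a_ge0 ab.
have sum_ge1 (x : R) : 0 <= x -> 1 <= \sum_(i < n) x ^+ i.
  move=> x_ge0; rewrite (bigD1 (Ordinal n_gt0)) //= expr0 lerDl.
  by apply: sumr_ge0 => i _; exact: exprn_ge0.
have sum_le : \sum_(i < n) a ^+ i <= \sum_(i < n) b ^+ i.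
  by apply: ler_sum => i _; apply: lerXn2r; rewrite ?nnegrE // (le_trans a_ge0).
have := sum_ge1 a a_ge0; have := sum_ge1 b (le_trans a_ge0 ab).
move: sum_le; set A := \sum_(i < n) _; set B := \sum_(i < n) _ => AB B1 A1.
apply: ler_wpM2l; first exact: ltW.
rewrite lef_pV2 ?posrE ?mulr_gt0 //; try lra.
by rewrite ler_pM2l //; lra.
Qed.

Local Open Scope classical_set_scope.
Local Open Scope ring_scope.

Section ColoredRegularGraph.
Variables (R : realType) (V : finType) (e : rel V) (green : pred V).
Hypothesis esymm : symmetric e.
Hypothesis econn : forall x y, connect e x y.
Hypothesis V_gt0 : (0 < #|V|)%N.
Variable k : nat.
Hypothesis regular : forall x, deg e x = k.
Hypothesis proper : forall x y, e x y -> green x != green y.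
Hypothesis balanced : #|[pred x | green x]| = #|[pred x | ~~ green x]|.

Local Notation g := #|[pred x | green x]|.

Lemma card_V_double : #|V| = (g + g)%N.
Proof.
by rewrite -(cardC [pred x | green x]) balanced.
Qed.

Lemma half_card_V : (#|V| %/ 2)%N = g.
Proof. by rewrite card_V_double addnn -mul2n mulKn. Qed.

Lemma green_card_gt0 : (0 < g)%N.
Proof. by move: V_gt0; rewrite card_V_double; lia. Qed.

(* A connected graph with vertices of both colours has an edge, so the common
   degree is positive. *)
Lemma degree_gt0 : (0 < k)%N.
Proof.
have /card_gt0P [xg] := green_card_gt0; rewrite inE => xg_green.
have := green_card_gt0; rewrite balanced => /card_gt0P [xr]; rewrite inE => xr_red.
have nonempty : [set xg]%SET != fset0 by apply/set0Pn; exists xg; rewrite inE.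
have nonfull : [set xg]%SET != fsetT.
  apply/eqP => /setP /(_ xr); rewrite !inE => /eqP xr_xg.
  by move: xr_red; rewrite xr_xg xg_green.
have [x [y [_ _ exy]]] := boundary_edge esymm econn nonempty nonfull.
by rewrite -(regular x) /deg; apply/card_gt0P; exists y; rewrite inE.
Qed.

Definition by_color (u v : R) (z : V) : R := if green z then u else v.

Lemma prod_by_color (u v : R) : \prod_z by_color u v z = (u * v) ^+ g.
Proof.
rewrite (bigID green) /= exprMn {2}balanced.
rewrite (eq_bigr (fun=> u)); last by move=> z; rewrite /by_color => ->.
rewrite [X in _ * X](eq_bigr (fun=> v)); last by move=> z; rewrite /by_color => /negbTE ->.
by rewrite !prodr_const.
Qed.

Lemma sum_by_color (u v : R) : \sum_z by_color u v z = g%:R * (u + v).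
Proof.
rewrite (bigID green) /= mulrDr.
rewrite (eq_bigr (fun=> u)); last by move=> z; rewrite /by_color => ->.
rewrite [X in _ + X](eq_bigr (fun=> v)); last by move=> z; rewrite /by_color => /negbTE ->.
by rewrite !sumr_const !mulr_natl balanced.
Qed.

Lemma rho_seq_cvg_closed_form (r s : R) : r != 1 -> 0 <= s -> s < Num.min 1 r ->
  rho_seq e green r s @ \oo -->
    (r * (r - 1) / ((r ^+ 2 - s ^+ 2) * (1 - fix_ratio r s ^+ g)) : R).
Proof.
move=> r1 s0 smin; have := smin; rewrite lt_min => /andP[s1 sr].
have [rs rs' r2s2] : [/\ r - s != 0, r + s != 0 & r ^+ 2 - s ^+ 2 != 0].
  by split; rewrite lt0r_neq0 //; nra.
pose c := by_color ((1 - s) / (r - s)) ((1 + s) / (r + s)).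
have balance x y : e x y -> fitA green (r + s) (r - s) x * c x * (1 - c y)
    + fitB green (1 + s) (1 - s) y * (c x - 1) = 0.
  move=> /proper; rewrite /fitA /fitB /c /by_color.
  by case: (green x); case: (green y) => // _; field; rewrite ?rs ?rs'.
have prod_c : \prod_z c z = fix_ratio r s ^+ g.
  by rewrite prod_by_color /fix_ratio; congr (_ ^+ _); field; rewrite rs rs' r2s2.
have prod_n1 : \prod_z c z != 1.
  by rewrite prod_c; exact: fix_ratio_pow_neq1 r1 s0 smin green_card_gt0.
have [pa pb pc pd] : [/\ 0 < r + s, 0 < r - s, 0 < 1 + s & 0 < 1 - s].
  by split; lra.
have := mean_fix_cvg_harmonic esymm econn V_gt0 degree_gt0 regular pa pb pc pd
  (prod_harm_harmonic esymm V_gt0 degree_gt0 regular pa pb pc pd balance)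
  (prod_harm_empty c) (prod_harm_full prod_n1).
rewrite prod_harm_singletons prod_c.
have -> : \sum_x (1 - c x) = \sum_x by_color ((r - 1) / (r - s)) ((r - 1) / (r + s)) x.
  by apply: eq_bigr => x _; rewrite /c /by_color; case: (green x); field.
rewrite sum_by_color card_V_double natrD.
rewrite closed_form_average // ?pnatr_eq0 -?lt0n ?green_card_gt0 //.
by rewrite -prod_c.
Qed.

Lemma rho_seq_cvg_neutral (s : R) : 0 <= s -> s < 1 ->
  rho_seq e green 1 s @ \oo --> ((#|V|%:R)^-1 : R).
Proof.
move=> s0 s1.
pose c := by_color (1 + s) (1 - s).
have balance x y : e x y -> fitA green (1 + s) (1 - s) x * c y
    - fitB green (1 + s) (1 - s) y * c x = 0.
  by move=> _; rewrite /fitA /fitB /c /by_color mulrC subrr.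
have sum_c : \sum_z c z != 0.
  by rewrite sum_by_color mulf_neq0 ?pnatr_eq0 -?lt0n ?green_card_gt0 //; lra.
have [pc pd] : 0 < 1 + s /\ 0 < 1 - s by split; lra.
have := mean_fix_cvg_harmonic esymm econn V_gt0 degree_gt0 regular pc pd pc pd
  (sum_harm_harmonic esymm V_gt0 degree_gt0 regular pc pd pc pd balance)
  (sum_harm_empty c) (sum_harm_full sum_c).
by rewrite sum_harm_singletons // mulr1.
Qed.

Lemma rho_A_geometric (r s : R) : r != 1 -> 0 <= s -> s < Num.min 1 r ->
  rho_A e green r s = r / ((r + 1) * \sum_(i < g) fix_ratio r s ^+ i).
Proof.
move=> r1 s0 smin.
rewrite -fix_closed_form_geometric ?green_card_gt0 // /rho_A /mean_fixation.
exact: (cvg_lim (@Rhausdorff R) (rho_seq_cvg_closed_form r1 s0 smin)).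
Qed.

Lemma rho_A_increasing (r s1 s2 : R) : 1 < r -> 0 <= s1 -> s1 <= s2 ->
  s2 < Num.min 1 r -> rho_A e green r s1 <= rho_A e green r s2.
Proof.
move=> r1 s1_ge0 s12 s2min.
have [r_gt0 r_neq1] : 0 < r /\ r != 1 by split; [lra|rewrite gt_eqF].
have s2_ge0 := le_trans s1_ge0 s12.
rewrite !rho_A_geometric ?(le_lt_trans s12) //.
apply: geometric_closed_form_antitone green_card_gt0 _ _ => //.
  exact: fix_ratio_ge0.
exact: fix_ratio_antitone.
Qed.

Lemma rho_A_decreasing (r s1 s2 : R) : r < 1 -> 0 <= s1 -> s1 <= s2 ->
  s2 < Num.min 1 r -> rho_A e green r s2 <= rho_A e green r s1.
Proof.
move=> r1 s1_ge0 s12 s2min.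
have r_neq1 : r != 1 by rewrite lt_eqF.
have r_gt0 : 0 < r by move: s2min; rewrite lt_min => /andP[_]; lra.
have s1min := le_lt_trans s12 s2min.
rewrite !rho_A_geometric ?(le_trans s1_ge0 s12) //.
apply: geometric_closed_form_antitone green_card_gt0 _ _ => //.
  exact: fix_ratio_ge0.
exact: fix_ratio_monotone.
Qed.

End ColoredRegularGraph.

Theorem mainTheorem4 (R : realType) (V : finType) (e : rel V) (green : pred V)
  (r : R) :
  symmetric e -> irreflexive e ->
  (0 < #|V|)%N ->
  (forall x y, connect e x y) ->
  (exists k : nat, forall x, deg e x = k) ->
  (forall x y, e x y -> green x != green y) ->
  #|[pred x | green x]| = #|[pred x | ~~ green x]| ->
  0 < r ->
  [/\ r != 1 -> forall s : R, 0 <= s -> s < Num.min 1 r ->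
        rho_seq e green r s @ \oo -->
          (r * (r - 1) / ((r ^+ 2 - s ^+ 2) *
             (1 - ((1 - s ^+ 2) / (r ^+ 2 - s ^+ 2)) ^+ (#|V| %/ 2)%N)) : R),
      1 < r -> forall s1 s2 : R, 0 <= s1 -> s1 <= s2 -> s2 < Num.min 1 r ->
        rho_A e green r s1 <= rho_A e green r s2,
      r < 1 -> forall s1 s2 : R, 0 <= s1 -> s1 <= s2 -> s2 < Num.min 1 r ->
        rho_A e green r s2 <= rho_A e green r s1
    & r = 1 -> forall s : R, 0 <= s -> s < 1 ->
        rho_seq e green r s @ \oo --> ((#|V|%:R)^-1 : R)].
Proof.
move=> esymm _ V_gt0 econn [k regular] proper balanced _; split.
- move=> r1 s s0 smin; rewrite (half_card_V balanced).
  exact (rho_seq_cvg_closed_form esymm econn V_gt0 regular proper balanced r1 s0 smin).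
- move=> r1 s1 s2 s1_ge0 s12 s2min.
  exact (rho_A_increasing esymm econn V_gt0 regular proper balanced r1 s1_ge0 s12 s2min).
- move=> r1 s1 s2 s1_ge0 s12 s2min.
  exact (rho_A_decreasing esymm econn V_gt0 regular proper balanced r1 s1_ge0 s12 s2min).
- move=> -> s s0 s1.
  exact (rho_seq_cvg_neutral esymm econn V_gt0 regular balanced s0 s1).
Qed.
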